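(* Let $(a,b,c,d)\in\mathbb{Z}_{\ge0}^4$ and let $t$ be a positive integer with $t\le q_0-1$. Then $aq+b(q+q_0)+c(q+2q_0)+d(q+2q_0+1)\le t(q+2q_0+1)$ if and only if $a+b+c+d\le t$.
   Context: $n\ge2$ is an integer, $q_0=2^n$ and $q=2q_0^2$. *)

From mathcomp Require Import all_boot.
Definition q0 (n : nat) : nat := 2 ^ n.
Definition q (n : nat) : nat := 2 * (q0 n) ^ 2.

From mathcomp Require Import all_boot.
From mathcomp Require Import zify.

(* Every weight lies between [q] and [q + 2 q0 + 1], so a weighted sum of [m]
   terms lies between [m q] and [m (q + 2 q0 + 1)].  For [t <= q0 - 1] the
   excess [t (2 q0 + 1)] stays below [q], so the upper bound [t (q + 2 q0 + 1)]
   already separates [m <= t] from [m >= t + 1]. *)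

Lemma leq_count_of_weighted_bound (m t lo hi S : nat) :
  m * lo <= S -> S <= t * hi -> t * hi < t.+1 * lo -> m <= t.
Proof.
move=> loS Shi gap; rewrite leqNgt; apply/negP => tm.
have : t.+1 * lo <= m * lo by rewrite leq_mul2r tm orbT.
by lia.
Qed.

Lemma weighted_bound_of_leq_count (m t hi S : nat) :
  S <= m * hi -> m <= t -> S <= t * hi.
Proof. by move=> Shi mt; apply: leq_trans Shi _; rewrite leq_mul2r mt orbT. Qed.

Lemma excess_lt_q (n t : nat) : t <= q0 n - 1 -> t * (2 * q0 n + 1) < q n.
Proof.
rewrite /q; have : 0 < q0 n by rewrite expn_gt0.
set x := q0 n => x_gt0 tx.
have : t * (2 * x + 1) <= (x - 1) * (2 * x + 1) by rewrite leq_mul2r tx orbT.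
by nia.
Qed.

Theorem lemma3p1 (n : nat) (hn : 2 <= n) (a b c d t : nat)
  (ht0 : 0 < t) (ht : t <= q0 n - 1) :
  (a * q n + b * (q n + q0 n) + c * (q n + 2 * q0 n)
     + d * (q n + 2 * q0 n + 1) <= t * (q n + 2 * q0 n + 1))
  <-> (a + b + c + d <= t).
Proof.
set S := _ + d * _; set hi := q n + 2 * q0 n + 1.
have loS : (a + b + c + d) * q n <= S by rewrite /S; lia.
have Shi : S <= (a + b + c + d) * hi by rewrite /S /hi; lia.
have gap : t * hi < t.+1 * q n by move: (@excess_lt_q n t ht); rewrite /hi; lia.
split=> [Sle | mle].
- exact: leq_count_of_weighted_bound loS Sle gap.
- exact: weighted_bound_of_leq_count Shi mle.
Qed.
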